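(* For every set $A$ of positive integers with $1\in A$ and every $n\ge 0$, $\mathrm{Total}(n,A)=G(n,A)$; that is, the maximum total value of a reachable position in the $n$-cell abstract generalized 2048 game with tile values $A$ equals the smallest nonnegative integer for which the greedy change-making algorithm with coin values $A$ uses $n$ or more coins (both sides being $\infty$ simultaneously when no such integer exists).
   Context: For an integer $n\ge 0$, the abstract generalized 2048 game $\mathrm{AGG}(n,A)$ is played on $n$ indistinguishable cells. A position assigns to each cell either nothing (the cell is empty) or a tile carrying a value in $A$. The initial position has all cells empty. A step, which can be performed from any position having at least one empty cell, consists of: (i) placing a new tile of value $1$ into a chosen empty cell; then (ii) optionally choosing any collection of pairwise disjoint sets of nonempty cells such that the sum of the tile values in each chosen set belongs to $A$, and merging each chosen set into a single tile, whose value is that sum, placed in one cell of the set, the other cells of the set becoming empty. The game ends when, after a step, all cells are nonempty (no further step is then possible). A position is reachable if it can be obtained from the initial position by a finite sequence of steps; its total value is the sum of its tile values. $\mathrm{Total}(n,A)$ is the supremum (possibly $\infty$) of the total values of reachable positions of $\mathrm{AGG}(n,A)$ ($\mathrm{Total}(0,A)=0$). The greedy change-making algorithm with coin values $A$, applied to a nonnegative integer $s$, uses no coins if $s=0$, and otherwise selects the largest $c\in A$ with $c\le s$ and then recursively makes change for $s-c$; the number of coins used is the number of selections. $G(n,A)$ is the smallest nonnegative integer $s$ for which this algorithm uses at least $n$ coins ($\infty$ if none exists). *)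

From mathcomp Require Import all_boot.
Set Implicit Arguments. Unset Strict Implicit. Unset Printing Implicit Defensive.

(* A set of coin / tile values is a predicate A : nat -> Prop (possibly infinite,
   possibly undecidable). *)

(* Cells are indistinguishable, so a position is the multiset of values of the
   nonempty cells, represented by a list (order irrelevant); the number of empty
   cells is n - size p. *)

(* One step from p to q: there is an empty cell (size p < n); a tile 1 is placed,
   giving the tiles 1 :: p; then the tiles are partitioned into groups, each group
   being either a single untouched tile or a chosen set whose sum lies in A, and
   each group is merged into one tile whose value is its sum. *)
Definition agg_step (n : nat) (A : nat -> Prop) (p q : seq nat) : Prop :=
  size p < n /\
  exists gs : seq (seq nat),
    [/\ perm_eq (flatten gs) (1 :: p),
        (forall g, g \in gs -> g != [::] /\ (size g = 1 \/ A (sumn g)))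
      & q = map sumn gs].

Inductive agg_reachable (n : nat) (A : nat -> Prop) : seq nat -> Prop :=
  | agg_reach0 : agg_reachable n A [::]
  | agg_reachS p q : agg_reachable n A p -> agg_step n A p q -> agg_reachable n A q.

(* Total(n, A) = v, where v = Some t means the supremum is the finite value t and
   v = None means the supremum is infinity. *)
Definition Total_is (n : nat) (A : nat -> Prop) (v : option nat) : Prop :=
  match v with
  | Some t => (forall p, agg_reachable n A p -> sumn p <= t) /\
              (forall u, (forall p, agg_reachable n A p -> sumn p <= u) -> t <= u)
  | None => forall u, exists p, agg_reachable n A p /\ u < sumn p
  end.

Inductive greedy_coins (A : nat -> Prop) : nat -> nat -> Prop :=
  | greedy0 : greedy_coins A 0 0
  | greedyS s c k :
      0 < s -> A c -> c <= s -> (forall c', A c' -> c' <= s -> c' <= c) ->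
      greedy_coins A (s - c) k -> greedy_coins A s k.+1.

Definition greedy_uses_at_least (A : nat -> Prop) (s n : nat) : Prop :=
  exists k, greedy_coins A s k /\ n <= k.

(* G(n, A) = v, with v = None meaning infinity. *)
Definition G_is (n : nat) (A : nat -> Prop) (v : option nat) : Prop :=
  match v with
  | Some s => greedy_uses_at_least A s n /\
              (forall s', s' < s -> ~ greedy_uses_at_least A s' n)
  | None => forall s, ~ greedy_uses_at_least A s n
  end.

From mathcomp Require Import all_boot zify.
From Stdlib Require Import Classical Wf_nat.
Set Implicit Arguments. Unset Strict Implicit. Unset Printing Implicit Defensive.

(* Lower bound: the greedy change of s + 1 arises from that of s by adding a 1
   and merging it with a tail of the coins, so while the greedy change uses
   fewer than n coins it remains a reachable position; in particular the
   greedy change of G(n, A) is reachable.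
   Upper bound: from every nonempty reachable position one can remove a tile so
   that the rest is reachable with n - 1 cells. If G(n, A) = t with greedy
   coin c, then G(n - 1, A) = t - c; by induction on n and on the play, a
   non-full position has total below t, so every position has total at most t,
   the removed tile is a value of A at most t, hence at most c, and the rest of
   a non-full position totals below t - c. *)

Lemma perm_map_lift (T1 T2 : eqType) (f : T1 -> T2) (s : seq T2) (l : seq T1) :
  perm_eq s (map f l) -> exists2 l', perm_eq l l' & map f l' = s.
Proof.
elim: s l => [|x s IHs] l Esl.
  by move: Esl; rewrite perm_sym => /perm_nilP; case: l => // _; exists [::].
have /mapP [y l_y Ex] : x \in map f l by rewrite -(perm_mem Esl) mem_head.
subst x.
have El := perm_to_rem l_y.
have [|l' El' <-] := IHs (rem y l).
  by rewrite -(perm_cons (f y)); apply: perm_trans Esl (perm_map f El).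
by exists (y :: l'); first by apply: perm_trans El _; rewrite perm_cons.
Qed.

Section Merging.

Variable A : nat -> Prop.

Definition valid_groups (gs : seq (seq nat)) : Prop :=
  forall g, g \in gs -> g != [::] /\ (size g = 1 \/ A (sumn g)).

Definition merges_to (q p : seq nat) : Prop :=
  exists gs, [/\ valid_groups gs, perm_eq (flatten gs) q & perm_eq p (map sumn gs)].

Lemma valid_groups_sub gs hs : {subset gs <= hs} -> valid_groups hs -> valid_groups gs.
Proof. by move=> sub_gs Vhs g /sub_gs /Vhs. Qed.

(* Each group of gs lists the sums of consecutive groups of hs; merging those
   groups of hs at once gives ks. *)
Lemma valid_groups_compose (gs hs : seq (seq nat)) :
  map sumn hs = flatten gs -> valid_groups hs -> valid_groups gs ->
  exists ks, [/\ flatten ks = flatten hs, map sumn ks = map sumn gs & valid_groups ks].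
Proof.
elim: gs hs => [|g gs IHgs] hs Ehs Vhs Vgs.
  by case: hs Ehs {Vhs} => // _; exists [::].
set c := take (size g) hs; set d := drop (size g) hs.
have Ec : map sumn c = g by rewrite map_take Ehs take_size_cat.
have Ed : map sumn d = flatten gs by rewrite map_drop Ehs drop_size_cat.
have sub_c : {subset c <= hs} by move=> x; apply: mem_take.
have [ks [Fks Sks Vks]] := IHgs d Ed (valid_groups_sub (fun x => @mem_drop _ _ _ x) Vhs)
  (valid_groups_sub (fun x => @mem_behead _ _ x) Vgs).
exists (flatten c :: ks); split.
- by rewrite /= Fks -flatten_cat cat_take_drop.
- by rewrite /= Sks sumn_flatten Ec.
move=> k; rewrite inE => /predU1P [-> | /Vks //].
have [g_nil g_ok] := Vgs g (mem_head _ _).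
clearbody c; split.
  move: g_nil sub_c; rewrite -Ec; case: c {Ec} => // h c' _ sub_c.
  by have [+ _] := Vhs h (sub_c h (mem_head _ _)); case: h {sub_c}.
case: g_ok => [g1 | Ag]; last by right; rewrite sumn_flatten Ec.
move: g1 sub_c; rewrite -Ec size_map; case: c {Ec} => [|h [|]] //= _ sub_c.
by rewrite cats0; have [_] := Vhs h (sub_c h (mem_head _ _)).
Qed.

Lemma merges_to_trans q r p : merges_to q r -> merges_to r p -> merges_to q p.
Proof.
move=> [hs [Vhs Fhs Ehs]] [gs [Vgs Fgs Egs]].
have [hs' Ehs' Shs'] := perm_map_lift (perm_trans Fgs Ehs).
have Vhs' : valid_groups hs' by apply: valid_groups_sub Vhs => x; rewrite (perm_mem Ehs').
have [ks [Fks Sks Vks]] := valid_groups_compose Shs' Vhs' Vgs.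
exists ks; split=> //; last by rewrite Sks.
by rewrite Fks; apply: perm_trans Fhs; rewrite perm_sym perm_flatten.
Qed.

Lemma merges_to_perml q q' p : perm_eq q q' -> merges_to q p -> merges_to q' p.
Proof. by move=> Eq [gs [Vgs Fgs Egs]]; exists gs; split=> //; apply: perm_trans Fgs Eq. Qed.

Lemma merges_to_nil p : merges_to [::] p -> p = [::].
Proof.
move=> [[|g gs] [Vgs /perm_nilP Fgs Egs]]; first exact/perm_nilP.
by have [+ _] := Vgs g (mem_head _ _); case: g {Vgs Egs} Fgs.
Qed.

Lemma merges_to_refl q : merges_to q q.
Proof.
exists [seq [:: x] | x <- q]; split.
- by move=> g /mapP [x _ ->]; split=> //; left.
- by rewrite flatten_seq1.
- by elim: q => //= x q IHq; rewrite addn0 perm_cons.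
Qed.

Lemma merges_to_cons x q p : merges_to q p -> merges_to (x :: q) (x :: p).
Proof.
move=> [gs [Vgs Fgs Egs]]; exists ([:: x] :: gs); split.
- by move=> g; rewrite inE => /predU1P [-> | /Vgs //]; split=> //; left.
- by rewrite /= perm_cons.
- by rewrite /= addn0 perm_cons.
Qed.

Lemma merges_to_sumn_tile q : q != [::] -> A (sumn q) -> merges_to q [:: sumn q].
Proof.
move=> q_nil Aq; exists [:: q]; split=> //=; last by rewrite cats0.
by move=> g; rewrite inE => /eqP ->; split=> //; right.
Qed.

End Merging.

Section Reachability.

Variable A : nat -> Prop.

Lemma agg_step_merges n q p : agg_step n A q p -> size q < n /\ merges_to A (1 :: q) p.
Proof. by move=> [q_lt [gs [Fgs Vgs ->]]]; split=> //; exists gs. Qed.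

Lemma agg_step_sumn n q p : agg_step n A q p -> sumn p = (sumn q).+1.
Proof. by move=> [_ [gs [Fgs _ ->]]]; rewrite -sumn_flatten (perm_sumn Fgs). Qed.

Lemma agg_reachable_perm n p p' :
  agg_reachable n A p -> perm_eq p p' -> agg_reachable n A p'.
Proof.
case=> [|q {}p Rq [q_lt [gs [Fgs Vgs ->]]]] Ep.
  by move: Ep; rewrite perm_sym => /perm_nilP ->; constructor.
rewrite perm_sym in Ep; have [gs' Egs <-] := perm_map_lift Ep.
apply: (agg_reachS Rq); split=> //; exists gs'; split.
- by apply: perm_trans Fgs; rewrite perm_sym perm_flatten.
- by move=> g; rewrite -(perm_mem Egs); apply: Vgs.
- by [].
Qed.

Lemma agg_reachable_step n q p :
  agg_reachable n A q -> size q < n -> merges_to A (1 :: q) p -> agg_reachable n A p.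
Proof.
move=> Rq q_lt [gs [Vgs Fgs Egs]].
rewrite perm_sym in Egs; apply: agg_reachable_perm Egs; apply: (agg_reachS Rq).
by split=> //; exists gs.
Qed.

Definition merge_closed n (X : seq nat) : Prop :=
  forall Y W p, perm_eq X (Y ++ W) -> merges_to A Y p -> agg_reachable n A p.

Lemma merge_closed_cons1 n r : merge_closed n r -> size r < n -> merge_closed n (1 :: r).
Proof.
move=> Cr r_lt Y W p E M; have [Y_1 | Y_n1] := boolP (1 \in Y).
  have EY := perm_to_rem Y_1.
  have Er : perm_eq r (rem 1 Y ++ W).
    by rewrite -(perm_cons 1); apply: perm_trans E _; rewrite -cat_cons perm_cat2r.
  apply: agg_reachable_step (Cr _ _ _ Er (merges_to_refl _ _)) _ (merges_to_perml EY M).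
  by apply: leq_ltn_trans r_lt; rewrite (perm_size Er) size_cat leq_addr.
have W_1 : 1 \in W.
  by move: (perm_mem E 1); rewrite mem_head mem_cat (negbTE Y_n1).
apply: Cr _ (rem 1 W) _ _ M; rewrite -(perm_cons 1); apply: perm_trans E _.
by rewrite perm_sym -cat1s perm_catCA perm_cat2l perm_sym perm_to_rem.
Qed.

Lemma agg_reachable_merge_closed n r : agg_reachable n A r -> merge_closed n r.
Proof.
elim=> [|q _ _ Cq [q_lt [hs [Fhs Vhs ->]]]] Y W p E M.
  move: E; rewrite perm_sym => /perm_nilP; case: Y M => // M _.
  by rewrite (merges_to_nil M); constructor.
rewrite perm_sym in E; have [hs' Ehs Shs] := perm_map_lift E.
set hs1 := take (size Y) hs'.
have Shs1 : map sumn hs1 = Y by rewrite map_take Shs take_size_cat.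
have Vhs1 : valid_groups A hs1.
  by apply: valid_groups_sub Vhs => x /mem_take; rewrite (perm_mem Ehs).
apply: (merge_closed_cons1 Cq q_lt (Y := flatten hs1) (W := flatten (drop (size Y) hs'))).
  rewrite -flatten_cat cat_take_drop perm_sym; apply: perm_trans Fhs.
  by rewrite perm_sym perm_flatten.
by apply: merges_to_trans M; exists hs1; split=> //; rewrite Shs1.
Qed.

Lemma agg_reachable_drop_tile n p : agg_reachable n A p -> p != [::] ->
  exists y r, perm_eq p (y :: r) /\ agg_reachable n.-1 A r.
Proof.
elim=> [|q _ _ IHq [q_lt [gs [Fgs Vgs ->]]]] // _.
(* z is the tile of 1 :: q that the induction hypothesis removes (the new 1
   if q is empty); the group absorbing z is the tile removed from p. *)
have [z [X [EX CX]]] : exists z X, perm_eq (1 :: q) (z :: X) /\ merge_closed n.-1 X.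
  have [-> | q_nil] := eqVneq q [::].
    by exists 1, [::]; split=> //; apply: agg_reachable_merge_closed; constructor.
  have [y [r [Eq Rr]]] := IHq q_nil.
  exists y, (1 :: r); split.
    apply: perm_trans (_ : perm_eq _ (1 :: y :: r)) _; first by rewrite perm_cons.
    exact: permEl (perm_catCA [:: 1] [:: y] r).
  apply: merge_closed_cons1 (agg_reachable_merge_closed Rr) _.
  by rewrite (perm_size Eq) in q_lt; case: n {IHq Rr} q_lt.
have /flattenP [h gs_h h_z] : z \in flatten gs.
  by rewrite (perm_mem Fgs) (perm_mem EX) mem_head.
have Egs := perm_to_rem gs_h.
have EX' : perm_eq X (flatten (rem h gs) ++ rem z h).
  rewrite perm_sym perm_catC -(perm_cons z) -cat_cons.
  apply: (perm_trans _ (perm_trans Fgs EX)).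
  have Egs' : perm_eq (h :: rem h gs) gs by rewrite perm_sym.
  apply: (perm_trans _ (perm_flatten Egs')).
  by rewrite [flatten _]/= perm_cat2r perm_sym perm_to_rem.
exists (sumn h), (map sumn (rem h gs)); split; first exact: (perm_map sumn Egs).
apply: CX EX' _; exists (rem h gs); split=> //.
by apply: valid_groups_sub Vgs => x /mem_rem.
Qed.

Lemma agg_reachable_tiles (A1 : A 1) n p : agg_reachable n A p -> forall x, x \in p -> A x.
Proof.
elim=> [|q _ _ IHq [_ [gs [Fgs Vgs ->]]]] // x /mapP [g gs_g ->].
have [g_nil [g1 | //]] := Vgs g gs_g.
case: g g1 gs_g g_nil => [|y [|]] //= _ gs_y _; rewrite addn0.
have : y \in 1 :: q by rewrite -(perm_mem Fgs); apply/flattenP; exists [:: y]; rewrite ?mem_head.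
by rewrite inE => /predU1P [-> | /IHq].
Qed.

End Reachability.

Inductive greedy_change (A : nat -> Prop) : nat -> seq nat -> Prop :=
  | greedy_change0 : greedy_change A 0 [::]
  | greedy_changeS s c l :
      0 < s -> A c -> c <= s -> (forall c', A c' -> c' <= s -> c' <= c) ->
      greedy_change A (s - c) l -> greedy_change A s (c :: l).

Section Greedy.

Variable A : nat -> Prop.
Hypothesis A1 : A 1.

Lemma greedy_change_sumn s l : greedy_change A s l -> sumn l = s.
Proof. by elim=> //= {}s c {}l _ _ c_le _ _ ->; rewrite subnKC. Qed.

Lemma greedy_change_coins s l : greedy_change A s l -> greedy_coins A s (size l).
Proof.
by elim=> [|{}s c {}l s_gt0 Ac c_le c_max _ IHl]; [exact: greedy0 | exact: greedyS IHl].
Qed.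

Lemma greedy_change_succ s l : greedy_change A s l ->
  exists2 l', greedy_change A s.+1 l' & merges_to A (1 :: l) l'.
Proof.
have one_coin s0 l0 : greedy_change A s0 l0 -> A s0.+1 ->
    exists2 l', greedy_change A s0.+1 l' & merges_to A (1 :: l0) l'.
  move=> Gs0 As0; exists [:: s0.+1].
    by apply: greedy_changeS => //; rewrite subnn; constructor.
  have -> : s0.+1 = sumn (1 :: l0) by rewrite /= (greedy_change_sumn Gs0).
  by apply: merges_to_sumn_tile; rewrite //= (greedy_change_sumn Gs0).
elim=> [|{}s c {}l s_gt0 Ac c_le c_max Gl [l' Gl' Ml']].
  by apply: one_coin A1; constructor.
have [As | nAs] := classic (A s.+1); first by apply: one_coin As; constructor.
exists (c :: l').
  apply: greedy_changeS => //; [exact: leqW | | by rewrite subSn].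
  move=> c' Ac' c'_le; apply: c_max => //.
  by move: c'_le; rewrite leq_eqVlt => /predU1P [c'_eq | //]; rewrite c'_eq in Ac'.
apply: merges_to_perml (merges_to_cons c Ml').
exact: permEl (perm_catCA [:: c] [:: 1] l).
Qed.

Lemma greedy_change_reachable n s : (forall s', s' < s -> ~ greedy_uses_at_least A s' n) ->
  exists2 l, greedy_change A s l & agg_reachable n A l.
Proof.
elim: s => [|s IHs] below_s; first by exists [::]; constructor.
have [l Gl Rl] := IHs (fun s' s'_lt => below_s s' (leqW s'_lt)).
have [l' Gl' Ml'] := greedy_change_succ Gl.
exists l' => //; apply: agg_reachable_step Rl _ Ml'; rewrite ltnNge.
apply/negP => n_le; apply: (below_s s (ltnSn s)).
by exists (size l); split=> //; exact: greedy_change_coins.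
Qed.

Hypothesis Apos : forall a, A a -> 0 < a.

Lemma G_is_pred n t : G_is n.+1 A (Some t) ->
  exists c, [/\ A c, (forall c', A c' -> c' <= t -> c' <= c) & G_is n A (Some (t - c))].
Proof.
move=> [[k [Gk n_lt]] t_min].
case: Gk t_min n_lt => [|{}t c {}k t_gt0 Ac c_le c_max Gk] t_min n_lt //.
exists c; split=> //; split; first by exists k.
move=> s s_lt [k' [Gk' n_le]]; apply: (t_min (c + s)); first by lia.
exists k'.+1; split=> //; apply: (greedyS (c := c)); rewrite ?addKn ?leq_addr //.
  by have := Apos Ac; lia.
by move=> c' Ac' c'_le; apply: c_max => //; lia.
Qed.

Lemma agg_reachable_sum_bound n t : G_is n A (Some t) ->
  forall p, agg_reachable n A p -> sumn p <= t /\ (size p < n -> sumn p < t).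
Proof.
elim: n t => [|n IHn] t Gt.
  by move=> p; case=> // q {}p _ [].
have [c [Ac c_max Gn]] := G_is_pred Gt.
move=> p; elim=> [|q {}p Rq [_ IHq] St].
  split=> // _; case: Gt => [[k [Gk n_lt]] _].
  by case: Gk n_lt.
have [q_lt _] := agg_step_merges St.
have Sp := agg_step_sumn St.
have p_le : sumn p <= t by rewrite Sp; exact: IHq.
split=> // p_lt.
have Rp := agg_reachS Rq St.
have p_nil : p != [::] by case: p Sp {St Rp p_le p_lt}.
have [y [r [Ep Rr]]] := agg_reachable_drop_tile Rp p_nil.
have Sp' : sumn p = y + sumn r by rewrite (perm_sumn Ep).
have y_le : y <= c.
  apply: c_max; first by apply: (agg_reachable_tiles A1 Rp); rewrite (perm_mem Ep) mem_head.
  by lia.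
have := (IHn _ Gn r Rr).2; rewrite (perm_size Ep) /= in p_lt.
by move=> /(_ p_lt); lia.
Qed.

End Greedy.

Section Values.

Variables (A : nat -> Prop) (n : nat).

Lemma Total_is_max t : (forall p, agg_reachable n A p -> sumn p <= t) ->
  (exists2 p, agg_reachable n A p & sumn p = t) ->
  forall v, Total_is n A v <-> v = Some t.
Proof.
move=> le_t [p Rp Sp] [t'|] /=; split=> //.
- move=> [le_t' least_t']; congr Some.
  by apply/eqP; rewrite eqn_leq least_t' // -Sp le_t'.
- by case=> ->; split=> // u le_u; rewrite -Sp; apply: le_u.
- by move=> /(_ t) [q [Rq]]; rewrite ltnNge le_t.
Qed.

Lemma Total_is_unbounded : (forall u, exists2 p, agg_reachable n A p & sumn p = u) ->
  forall v, Total_is n A v <-> v = None.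
Proof.
move=> onto [t|] /=; split=> //.
- move=> [le_t _]; have [p Rp Sp] := onto t.+1.
  by have := le_t p Rp; rewrite Sp ltnn.
- by move=> _ u; have [p Rp Sp] := onto u.+1; exists p; rewrite Sp.
Qed.

Lemma G_is_Some_iff t : G_is n A (Some t) -> forall v, G_is n A v <-> v = Some t.
Proof.
move=> [uses_t least_t] [t'|] /=; split=> //; last by move/(_ t).
  by move=> [uses_t' least_t']; congr Some; case: (ltngtP t' t) => // [/least_t | /least_t'].
by case=> ->.
Qed.

Lemma G_is_None_iff : (forall s, ~ greedy_uses_at_least A s n) ->
  forall v, G_is n A v <-> v = None.
Proof. by move=> none [t|] /=; split=> // [[/none]]. Qed.

Lemma G_is_least : (exists s, greedy_uses_at_least A s n) -> exists t, G_is n A (Some t).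
Proof.
move=> uses.
have [t [[uses_t least_t] _]] := dec_inh_nat_subset_has_unique_least_element _
  (fun s => classic (greedy_uses_at_least A s n)) uses.
exists t; split=> // s s_lt uses_s.
by move: s_lt; rewrite ltnNge => /negP; apply; apply/leP; apply: least_t.
Qed.

End Values.

Theorem mainTheorem10 (A : nat -> Prop) (Apos : forall a, A a -> 0 < a) (A1 : A 1)
  (n : nat) (v : option nat) :
  Total_is n A v <-> G_is n A v.
Proof.
have [[t Gt] | none] : (exists t, G_is n A (Some t)) \/ (forall s, ~ greedy_uses_at_least A s n).
  have [/G_is_least | none] := classic (exists s, greedy_uses_at_least A s n); first by left.
  by right=> s uses_s; apply: none; exists s.
- rewrite (G_is_Some_iff Gt) (Total_is_max (t := t)) //.
    by move=> p /(agg_reachable_sum_bound A1 Apos Gt) [].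
  have [l Gl Rl] := greedy_change_reachable A1 (proj2 Gt).
  by exists l; rewrite ?(greedy_change_sumn Gl).
- rewrite (G_is_None_iff none) Total_is_unbounded // => u.
  have [l Gl Rl] := greedy_change_reachable A1 (s := u) (fun s _ => none s).
  by exists l; rewrite ?(greedy_change_sumn Gl).
Qed.
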